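(* For $n\ge2$ and all $P,Q\in\Gamma_n$, $D_{h\Delta}(P\|Q)\le \frac34 D_{J\Delta}(P\|Q)$.
   Context: $\Gamma_n=\{P=(p_1,\dots,p_n): p_i>0,\ \sum p_i=1\}$. $h(P\|Q)=\frac12\sum_{i=1}^n(\sqrt{p_i}-\sqrt{q_i})^2$; $\Delta(P\|Q)=\sum_{i=1}^n\frac{(p_i-q_i)^2}{p_i+q_i}$; $J(P\|Q)=\sum_{i=1}^n(p_i-q_i)\ln\frac{p_i}{q_i}$. $D_{h\Delta}=h-\frac14\Delta$, $D_{J\Delta}=\frac18J-\frac14\Delta$. *)

(* concrete reals R. A distribution on n points is a function
   p : nat -> R, with only the values at indices 0..n-1 relevant. *)
From Stdlib Require Import Reals.
Open Scope R_scope.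

Fixpoint rsum (n : nat) (f : nat -> R) : R :=
  match n with
  | O => 0
  | S m => rsum m f + f m
  end.

Definition Gamma (n : nat) (p : nat -> R) : Prop :=
  (forall i, (i < n)%nat -> 0 < p i) /\ rsum n p = 1.

Definition hellinger (n : nat) (p q : nat -> R) : R :=
  / 2 * rsum n (fun i => (sqrt (p i) - sqrt (q i)) ^ 2).

Definition triangular (n : nat) (p q : nat -> R) : R :=
  rsum n (fun i => (p i - q i) ^ 2 / (p i + q i)).

Definition jdiv (n : nat) (p q : nat -> R) : R :=
  rsum n (fun i => (p i - q i) * ln (p i / q i)).

Definition D_hDelta (n : nat) (p q : nat -> R) : R :=
  hellinger n p q - / 4 * triangular n p q.

Definition D_JDelta (n : nat) (p q : nat -> R) : R :=
  / 8 * jdiv n p q - / 4 * triangular n p q.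

(* The inequality holds term by term: with [a = s^2], [b = t^2] and [x = s/t], the
   summand difference is, up to the factor [t^2/32], [6 (x^2-1) ln x - 16 (x-1)^2
   + 2 (x^2-1)^2/(x^2+1)] = [6 (x+1) (x-1) g x] with
   [g x = ln x - (8 (x-1)/(x+1) - (x^2-1)/(x^2+1)) / 3].  Now [g 1 = 0] and
   [g' x = (x-1)^4 (3x^2+2x+3) / (3x (x+1)^2 (x^2+1)^2) >= 0], so [g] has the sign
   of [x - 1]. *)
From Stdlib Require Import Reals Lra Psatz.
From Coquelicot Require Import Coquelicot.
Open Scope R_scope.

Lemma nondecreasing_of_derive_nonneg (f f' : R -> R) (a x y : R) :
  (forall z, a < z -> derivable_pt_lim f z (f' z)) ->
  (forall z, a < z -> 0 <= f' z) ->
  a < x -> x <= y -> f x <= f y.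
Proof.
  intros Hder Hpos Hax Hxy.
  destruct (Rle_lt_or_eq_dec x y Hxy) as [Hlt | ->]; [| lra].
  destruct (MVT_cor2 f f' x y Hlt) as [c [Hmvt Hc]].
  { intros c Hc. apply Hder. lra. }
  assert (0 <= f' c * (y - x)) by (apply Rmult_le_pos; [apply Hpos | ]; lra).
  lra.
Qed.

Lemma nondecreasing_root_sign (f f' : R -> R) (a c x : R) :
  (forall z, a < z -> derivable_pt_lim f z (f' z)) ->
  (forall z, a < z -> 0 <= f' z) ->
  f c = 0 -> a < c -> a < x -> 0 <= (x - c) * f x.
Proof.
  intros Hder Hpos Hc Hac Hax.
  destruct (Rle_or_lt x c) as [Hxc | Hcx].
  - assert (f x <= f c) by (apply (nondecreasing_of_derive_nonneg f f' a); auto).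
    nra.
  - assert (f c <= f x) by (apply (nondecreasing_of_derive_nonneg f f' a c x); auto; lra).
    nra.
Qed.

Definition ln_gap (x : R) : R :=
  ln x - (8 * (x - 1) / (x + 1) - (x ^ 2 - 1) / (x ^ 2 + 1)) / 3.

Definition ln_gap' (x : R) : R :=
  (x - 1) ^ 4 * (3 * x ^ 2 + 2 * x + 3) / (3 * x * (x + 1) ^ 2 * (x ^ 2 + 1) ^ 2).

Lemma ln_gap_derive x : 0 < x -> derivable_pt_lim ln_gap x (ln_gap' x).
Proof.
  intros Hx. apply is_derive_Reals. unfold ln_gap, ln_gap'.
  auto_derive.
  - repeat split; nra.
  - field. repeat split; nra.
Qed.

Lemma ln_gap'_nonneg x : 0 < x -> 0 <= ln_gap' x.
Proof.
  intros Hx. unfold ln_gap'. apply Rmult_le_pos.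
  - apply Rmult_le_pos; [| nra].
    replace ((x - 1) ^ 4) with (((x - 1) ^ 2) ^ 2) by ring. apply pow2_ge_0.
  - left. apply Rinv_0_lt_compat.
    repeat apply Rmult_lt_0_compat; try apply pow_lt; nra.
Qed.

Lemma ln_gap_sign x : 0 < x -> 0 <= (x - 1) * ln_gap x.
Proof.
  intros Hx. apply (nondecreasing_root_sign ln_gap ln_gap' 0); auto.
  - exact ln_gap_derive.
  - exact ln_gap'_nonneg.
  - unfold ln_gap. rewrite ln_1. field.
  - lra.
Qed.

Lemma ln_ratio_lower_bound x : 0 < x ->
  16 * (x - 1) ^ 2 - 2 * (x ^ 2 - 1) ^ 2 / (x ^ 2 + 1) <= 6 * (x ^ 2 - 1) * ln x.
Proof.
  intros Hx. pose proof (ln_gap_sign x Hx) as Hsign.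
  assert (E : 6 * (x ^ 2 - 1) * ln x - (16 * (x - 1) ^ 2 - 2 * (x ^ 2 - 1) ^ 2 / (x ^ 2 + 1))
              = 6 * (x + 1) * ((x - 1) * ln_gap x)).
  { unfold ln_gap. field. nra. }
  assert (0 <= 6 * (x + 1) * ((x - 1) * ln_gap x)) by (apply Rmult_le_pos; nra).
  lra.
Qed.

Lemma ln_ratio_lower_bound_hom s t : 0 < s -> 0 < t ->
  16 * (s - t) ^ 2 - 2 * (s ^ 2 - t ^ 2) ^ 2 / (s ^ 2 + t ^ 2)
  <= 6 * (s ^ 2 - t ^ 2) * ln (s / t).
Proof.
  intros Hs Ht.
  assert (Hx : 0 < s / t) by (apply Rdiv_lt_0_compat; lra).
  pose proof (Rmult_le_compat_l (t ^ 2) _ _ (pow2_ge_0 t) (ln_ratio_lower_bound _ Hx)) as K.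
  replace (t ^ 2 * (16 * (s / t - 1) ^ 2 - 2 * ((s / t) ^ 2 - 1) ^ 2 / ((s / t) ^ 2 + 1)))
    with (16 * (s - t) ^ 2 - 2 * (s ^ 2 - t ^ 2) ^ 2 / (s ^ 2 + t ^ 2)) in K
    by (field; split; nra).
  replace (t ^ 2 * (6 * ((s / t) ^ 2 - 1) * ln (s / t)))
    with (6 * (s ^ 2 - t ^ 2) * ln (s / t)) in K by (field; lra).
  exact K.
Qed.

Lemma hDelta_le_JDelta_term a b : 0 < a -> 0 < b ->
  / 2 * (sqrt a - sqrt b) ^ 2 - / 4 * ((a - b) ^ 2 / (a + b))
  <= 3 / 32 * ((a - b) * ln (a / b)) - 3 / 16 * ((a - b) ^ 2 / (a + b)).
Proof.
  intros Ha Hb.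
  assert (Hs : 0 < sqrt a) by (apply sqrt_lt_R0; lra).
  assert (Ht : 0 < sqrt b) by (apply sqrt_lt_R0; lra).
  pose proof (ln_ratio_lower_bound_hom _ _ Hs Ht) as K.
  rewrite !pow2_sqrt in K by lra.
  assert (El : ln (a / b) = 2 * ln (sqrt a / sqrt b)).
  { assert (Hab : 0 < a / b) by (apply Rdiv_lt_0_compat; lra).
    rewrite <- sqrt_div_alt by lra.
    rewrite <- (pow2_sqrt (a / b)) at 1 by lra.
    rewrite ln_pow by (apply sqrt_lt_R0; lra). simpl. ring. }
  rewrite El.
  assert (0 < a + b) by lra.
  assert (E : 3 / 32 * ((a - b) * (2 * ln (sqrt a / sqrt b))) - 3 / 16 * ((a - b) ^ 2 / (a + b))
              - (/ 2 * (sqrt a - sqrt b) ^ 2 - / 4 * ((a - b) ^ 2 / (a + b)))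
              = / 32 * (6 * (a - b) * ln (sqrt a / sqrt b)
                        - (16 * (sqrt a - sqrt b) ^ 2 - 2 * (a - b) ^ 2 / (a + b)))).
  { field. lra. }
  lra.
Qed.

Lemma rsum_lincomb n (f g : nat -> R) (a b : R) :
  rsum n (fun i => a * f i + b * g i) = a * rsum n f + b * rsum n g.
Proof. induction n as [| n IH]; simpl; [ring | rewrite IH; ring]. Qed.

Lemma rsum_le n (f g : nat -> R) :
  (forall i, (i < n)%nat -> f i <= g i) -> rsum n f <= rsum n g.
Proof.
  induction n as [| n IH]; intros Hfg; simpl; [lra |].
  assert (rsum n f <= rsum n g) by (apply IH; intros; apply Hfg; lia).
  assert (f n <= g n) by (apply Hfg; lia).
  lra.
Qed.

Theorem proposition5p4 (n : nat) (p q : nat -> R) :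
  (2 <= n)%nat -> Gamma n p -> Gamma n q ->
  D_hDelta n p q <= 3 / 4 * D_JDelta n p q.
Proof.
  intros _ [Hp _] [Hq _].
  unfold D_hDelta, D_JDelta, hellinger, triangular, jdiv.
  set (H := fun i => (sqrt (p i) - sqrt (q i)) ^ 2).
  set (T := fun i => (p i - q i) ^ 2 / (p i + q i)).
  set (J := fun i => (p i - q i) * ln (p i / q i)).
  replace (/ 2 * rsum n H - / 4 * rsum n T)
    with (rsum n (fun i => / 2 * H i + - / 4 * T i)) by (rewrite rsum_lincomb; ring).
  replace (3 / 4 * (/ 8 * rsum n J - / 4 * rsum n T))
    with (rsum n (fun i => 3 / 32 * J i + - (3 / 16) * T i)) by (rewrite rsum_lincomb; field).
  apply rsum_le. intros i Hi.
  pose proof (hDelta_le_JDelta_term (p i) (q i) (Hp i Hi) (Hq i Hi)).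
  unfold H, T, J. lra.
Qed.
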